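(* Let $n,k,l$ be nonnegative integers with $k+l\le n$, let $\alpha,\beta>-1$, set $\sigma=\alpha+\beta+1$, and for $h=k,\ldots,n-l$ and $i=k+l,\ldots,n$ define \[ z_{hi}=\binom{n}{h}\frac{(2i+\sigma)(k+l-n)_{i-k-l}(\alpha+2l+1)_{n-l-h}(\beta+2k+1)_{h-k}}{(\alpha+2l+1)_{i-k-l}\,(i+k+l+\sigma)_{n+1-k-l}},\qquad w_{hi}=Q_{i-k-l}(h-k;\,\beta+2k,\,\alpha+2l,\,n-k-l). \] Then for each fixed $h$ (and whenever the indices involved lie in the range $k+l\le i\le n$): \[ z_{h,k+l}=\binom{n}{h}\frac{(\alpha+2l+1)_{n-l-h}(\beta+2k+1)_{h-k}}{(2k+2l+\sigma+1)_{n-k-l}}, \] \[ z_{hi}=\frac{(2i+\sigma)(i+k+l+\alpha+\beta)(i-n-1)}{(\alpha+l+i-k)(i+n+\sigma)(2i+\alpha+\beta-1)}\,z_{h,i-1}\qquad(i=k+l+1,\ldots,n); \] and \[ w_{h,k+l}=1,\qquad w_{h,k+l+1}=1+\frac{(h-k)(2k+2l+\sigma+1)}{(k+l-n)(\beta+2k+1)}, \] \[ w_{hi}=P_h(i)\,w_{h,i-1}+S(i)\,w_{h,i-2}\qquad(i=k+l+2,\ldots,n), \] where \[ S(i)=\frac{(i-k-l-1)(i+\beta+\alpha+n)(i+l+\alpha-k-1)(2i+\beta+\alpha)}{(2i+\beta+\alpha-2)(i+k+l+\beta+\alpha)(i+k+\beta-l)(i-n-1)}, \] \[ P_h(i)=1-S(i)-\frac{(k-h)(2i+\alpha+\beta-1)_2}{(i+k+l+\alpha+\beta)(i+k+\beta-l)(i-n-1)}.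 \]
   Context: Pochhammer symbol: $(a)_0=1$, $(a)_j=a(a+1)\cdots(a+j-1)$. Hahn polynomials: for a nonnegative integer $N$, $a,b>-1$ and $m=0,1,\ldots,N$, $Q_m(x;a,b,N)=\sum_{j=0}^m\frac{(-m)_j(m+a+b+1)_j(-x)_j}{j!\,(a+1)_j\,(-N)_j}$. (The products $d_{hi}=z_{hi}w_{hi}$ are the coefficients of the Bernstein polynomial $B^n_h(x)=\binom nh x^h(1-x)^{n-h}$ in the basis of modified Jacobi polynomials $J_{i,k,l}^{(\alpha,\beta)}(x)=(1-x)^lx^kR^{(\alpha+2l,\beta+2k)}_{i-k-l}(x)$, $i=k+l,\ldots,n$, with $R^{(a,b)}_m$ the shifted Jacobi polynomials.) *)

From HB Require Import structures.
From mathcomp Require Import all_boot all_order all_algebra.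
Set Implicit Arguments. Unset Strict Implicit. Unset Printing Implicit Defensive.
Import Order.TTheory GRing.Theory Num.Theory.
Local Open Scope ring_scope.

Definition poch (R : ringType) (a : R) (j : nat) : R :=
  \prod_(i < j) (a + i%:R).

Definition hahnQ (R : fieldType) (m : nat) (x a b : R) (N : nat) : R :=
  \sum_(j < m.+1)
    (poch (- m%:R) j * poch (m%:R + a + b + 1) j * poch (- x) j)
    / (j`!%:R * poch (a + 1) j * poch (- N%:R) j).

Definition sigma (R : ringType) (al be : R) : R := al + be + 1.

Definition zc (R : fieldType) (n k l : nat) (al be : R) (h i : nat) : R :=
  'C(n, h)%:R *
  ((2 * i%:R + sigma al be) * poch ((k + l)%:R - n%:R) (i - k - l)
     * poch (al + (2 * l)%:R + 1) (n - l - h) * poch (be + (2 * k)%:R + 1) (h - k))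
  / (poch (al + (2 * l)%:R + 1) (i - k - l)
     * poch (i%:R + (k + l)%:R + sigma al be) (n.+1 - k - l)).

Definition wc (R : fieldType) (n k l : nat) (al be : R) (h i : nat) : R :=
  hahnQ (i - k - l) (h%:R - k%:R) (be + (2 * k)%:R) (al + (2 * l)%:R) (n - k - l).

Definition Sc (R : fieldType) (n k l : nat) (al be : R) (i : nat) : R :=
  ((i%:R - k%:R - l%:R - 1) * (i%:R + be + al + n%:R)
     * (i%:R + l%:R + al - k%:R - 1) * (2 * i%:R + be + al))
  / ((2 * i%:R + be + al - 2) * (i%:R + k%:R + l%:R + be + al)
     * (i%:R + k%:R + be - l%:R) * (i%:R - n%:R - 1)).

Definition Pc (R : fieldType) (n k l : nat) (al be : R) (h i : nat) : R :=
  1 - Sc n k l al be i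
  - ((k%:R - h%:R) * poch (2 * i%:R + al + be - 1) 2)
    / ((i%:R + k%:R + l%:R + al + be) * (i%:R + k%:R + be - l%:R) * (i%:R - n%:R - 1)).

From HB Require Import structures.
From mathcomp Require Import all_boot all_order all_algebra.
From mathcomp Require Import ring lra zify.
Import Order.TTheory GRing.Theory Num.Theory.
Set Implicit Arguments. Unset Strict Implicit. Unset Printing Implicit Defensive.
Local Open Scope ring_scope.

(* z_hi splits as a factor depending only on h times zeta_i, and
   zeta_i / zeta_(i-1) is read off one step of each Pochhammer symbol.
   With a = beta + 2k, b = alpha + 2l, N = n - k - l and m = i - k - l we have
   w_hi = Q_m(h - k; a, b, N), and P_h(i), S(i) are the coefficients of the
   three-term recurrence of Hahn polynomials in their degree, divided by its
   leading coefficient.  That recurrence is checked on the expansion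
   Q_m(x) = sum_j c_m(j) (-x)_j: since x (-x)_j = j (-x)_j - (-x)_(j+1), it becomes
   sum_j W_j (-x)_j = sum_j V_j with W_0 = 0 and W_(j+1) (-x)_(j+1) = V_j, a polynomial
   identity between Pochhammer symbols, and the sums telescope because c_(m-1)(m) = 0. *)

Section Pochhammer.
Variable R : nzRingType.
Implicit Types c : R.

Lemma poch0 c : poch c 0 = 1.
Proof. by rewrite /poch big_ord0. Qed.

Lemma pochS c j : poch c j.+1 = poch c j * (c + j%:R).
Proof. by rewrite /poch big_ord_recr. Qed.

Lemma pochSl c j : poch c j.+1 = c * poch (c + 1) j.
Proof.
rewrite /poch big_ord_recl addr0; congr (_ * _).
by apply: eq_bigr => i _; rewrite /bump /= -natr1 addrA addrAC.
Qed.

Lemma poch_shift c j : c * poch (c + 1) j = poch c j * (c + j%:R).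
Proof. by rewrite -pochSl pochS. Qed.

Lemma pochS_sub1 c j : poch (c - 1) j.+1 = (c - 1) * poch c j.
Proof. by rewrite pochSl subrK. Qed.

Lemma pochSS_sub2 c j : poch (c - 2) j.+2 = (c - 2) * (c - 1) * poch c j.
Proof.
rewrite pochSl (_ : c - 2 + 1 = c - 1) ?pochS_sub1 ?mulrA //.
by rewrite -addrA -[2]/(1 + 1) opprD addrNK.
Qed.

Lemma poch_oppn (m j : nat) : (m < j)%N -> poch (- (m%:R : R)) j = 0.
Proof.
elim: j => // j IH; rewrite ltnS leq_eqVlt pochS => /predU1P[-> | /IH->].
- by rewrite addNr mulr0.
- by rewrite mul0r.
Qed.

End Pochhammer.

Lemma poch_neq0 (R : idomainType) (c : R) j :
  (forall i, (i < j)%N -> c + i%:R != 0) -> poch c j != 0.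
Proof. by move=> nz; apply/prodf_neq0 => i _; apply: nz. Qed.

Lemma poch_gt0 (R : realDomainType) (c : R) j : 0 < c -> 0 < poch c j.
Proof. by move=> c_gt0; apply: prodr_gt0 => i _; rewrite ltr_wpDr ?ler0n. Qed.

Lemma addr_nat_neq0 (R : realDomainType) (x : R) (t : nat) :
  -1 < x -> x != 0 -> x + t%:R != 0.
Proof.
case: t => [|t] x_gt x_neq0; first by rewrite addr0.
apply/lt0r_neq0; have : (1 : R) <= t.+1%:R by rewrite ler1n.
lra.
Qed.

Section HahnCoefficients.
Variables (R : fieldType) (a b : R) (N : nat).

Definition hahn_num (m : R) (j : nat) : R := poch (- m) j * poch (m + a + b + 1) j.
Definition hahn_den (j : nat) : R := j`!%:R * poch (a + 1) j * poch (- N%:R) j.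
Definition hahn_coef (m : R) (j : nat) : R := hahn_num m j / hahn_den j.
Definition hahn_den_ratio (j : nat) : R := j.+1%:R * (a + 1 + j%:R) * (- N%:R + j%:R).

Lemma hahn_coef_eq0 (M j : nat) : (M < j)%N -> hahn_coef M%:R j = 0.
Proof. by move=> lt_Mj; rewrite /hahn_coef /hahn_num poch_oppn ?mul0r. Qed.

Lemma hahnQE (M J : nat) (x : R) : (M <= J)%N ->
  hahnQ M x a b N = \sum_(j < J.+1) hahn_coef M%:R j * poch (- x) j.
Proof.
move=> le_MJ; set F := fun j : nat => hahn_coef M%:R j * poch (- x) j.
have -> : hahnQ M x a b N = \sum_(j < M.+1) F j.
  by apply: eq_bigr => j _; rewrite /F /hahn_coef /hahn_num /hahn_den mulrAC.
rewrite (big_ord_widen J.+1 F (le_MJ : M < J.+1)%N) big_mkcond /=; apply: eq_bigr => j _.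
by case: ltnP => // lt_Mj; rewrite /F hahn_coef_eq0 ?mul0r.
Qed.

Lemma hahn_denS j : hahn_den j.+1 = hahn_den j * hahn_den_ratio j.
Proof. by rewrite /hahn_den /hahn_den_ratio factS natrM !pochS; ring. Qed.

(* The coefficients of the three-term recurrence of the Hahn polynomials
   (Koekoek--Swarttouw) for Q_(m-1), multiplied by hahnD m to clear denominators. *)
Definition hahnA (m : R) : R := (m + a + b) * (m + a) * (N%:R - m + 1) * (2 * m + a + b - 2).
Definition hahnC (m : R) : R := (m - 1) * (m + a + b + N%:R) * (m + b - 1) * (2 * m + a + b).
Definition hahnD (m : R) : R := (2 * m + a + b - 2) * (2 * m + a + b - 1) * (2 * m + a + b).

Definition hahn_rec_num (m : R) (j : nat) : R :=
  hahnA m * hahn_num m j - (hahnA m + hahnC m - hahnD m * j%:R) * hahn_num (m - 1) j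
  + hahnC m * hahn_num (m - 2) j.
Definition hahn_rec_coef (m : R) (j : nat) : R := hahn_rec_num m j / hahn_den j.

Lemma hahn_rec_coef0 m : hahn_rec_coef m 0 = 0.
Proof. by rewrite /hahn_rec_coef /hahn_rec_num /hahn_num !poch0; ring. Qed.

Lemma hahn_rec_numS m j :
  hahn_rec_num m j.+1 = hahnD m * hahn_num (m - 1) j * hahn_den_ratio j.
Proof.
rewrite /hahn_rec_num /hahn_num; case: j => [|j].
  by rewrite !pochS !poch0 /hahnA /hahnC /hahnD /hahn_den_ratio; ring.
set u := - m + 2; set v := m + a + b + 1.
have -> : - m = u - 2 by rewrite /u; ring.
have -> : - (m - 1) = u - 1 by rewrite /u; ring.
have -> : - (m - 2) = u by rewrite /u; ring.
have -> : m - 1 + a + b + 1 = v - 1 by rewrite /v; ring.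
have -> : m - 2 + a + b + 1 = v - 2 by rewrite /v; ring.
rewrite !pochSS_sub2 !pochS_sub1 !pochS /u /v /hahnA /hahnC /hahnD /hahn_den_ratio.
ring.
Qed.

End HahnCoefficients.

Section HahnRecurrence.
Variables (R : realFieldType) (a b : R) (N : nat).

Lemma hahn_den_ratio_neq0 j : -1 < a -> (j < N)%N -> hahn_den_ratio a N j != 0.
Proof.
move=> a_gt lt_jN; have j_ge0 : (0 : R) <= j%:R by rewrite ler0n.
have lt_jN' : (j%:R : R) < N%:R by rewrite ltr_nat.
have pos : 0 < a + 1 + j%:R by lra.
have neg : - N%:R + j%:R < 0 :> R by lra.
by rewrite !mulf_neq0 ?pnatr_eq0 //; [exact: lt0r_neq0 | exact: ltr0_neq0].
Qed.

Lemma hahn_den_neq0 j : -1 < a -> (j <= N)%N -> hahn_den a N j != 0.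
Proof.
move=> a_gt; elim: j => [|j IH] le_jN; first by rewrite /hahn_den fact0 !poch0 !mulr1 oner_neq0.
by rewrite hahn_denS mulf_neq0 ?IH ?hahn_den_ratio_neq0 // ltnW.
Qed.

Lemma hahn_rec_coefS m j : -1 < a -> (j < N)%N ->
  hahn_rec_coef a b N m j.+1 = hahnD a b m * hahn_coef a b N (m - 1) j.
Proof.
move=> a_gt lt_jN; have den_neq0 := hahn_den_neq0 a_gt (ltnW lt_jN).
have ratio_neq0 := hahn_den_ratio_neq0 a_gt lt_jN.
rewrite /hahn_rec_coef /hahn_coef hahn_rec_numS hahn_denS.
by field; rewrite den_neq0 ratio_neq0.
Qed.

Lemma hahnQ_rec (m : nat) (x : R) : -1 < a -> (2 <= m <= N)%N ->
  hahnA a b N m%:R * hahnQ m x a b N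
  - (hahnA a b N m%:R + hahnC a b N m%:R - x * hahnD a b m%:R) * hahnQ m.-1 x a b N
  + hahnC a b N m%:R * hahnQ (m - 2) x a b N = 0.
Proof.
case: m => [|[|M]] // a_gt /= le_MN; rewrite subn2 /=.
set m : R := M.+2%:R.
have em1 : M.+1%:R = m - 1 by rewrite /m -[M.+2]addn1 natrD addrK.
have em2 : M%:R = m - 2 by rewrite /m -!natr1; ring.
rewrite (hahnQE a b N x (leqnn M.+2)) (hahnQE a b N x (leqnSn M.+1)).
rewrite (hahnQE a b N x (leqW (leqnSn M))) em1 em2 !mulr_sumr -sumrB -big_split /=.
pose V j := hahnD a b m * hahn_coef a b N (m - 1) j * poch (- x) j.+1.
transitivity (\sum_(j < M.+3) (hahn_rec_coef a b N m j * poch (- x) j - V j)).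
  by apply: eq_bigr => j _; rewrite /V /hahn_rec_coef /hahn_rec_num /hahn_coef pochS; ring.
rewrite sumrB big_ord_recl hahn_rec_coef0 mul0r add0r [X in _ - X]big_ord_recr /=.
rewrite {2}/V -em1 hahn_coef_eq0 // mulr0 mul0r addr0.
apply/eqP; rewrite subr_eq0; apply/eqP/eq_bigr => j _.
by rewrite hahn_rec_coefS // (leq_trans _ le_MN).
Qed.

Lemma hahnA_neq0 (m : nat) : -1 < a -> -1 < b -> (2 <= m <= N)%N -> hahnA a b N m%:R != 0.
Proof.
move=> a_gt b_gt /andP[]; rewrite -!(ler_nat R) => two_le_m le_mN.
by rewrite !mulf_neq0 //; apply/lt0r_neq0; lra.
Qed.

End HahnRecurrence.

Section PaperCoefficients.
Variables (R : fieldType) (n k l : nat) (al be : R).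

Local Notation a := (be + (2 * k)%:R).
Local Notation b := (al + (2 * l)%:R).
Local Notation N := (n - k - l)%N.

Definition zeta (i : nat) : R :=
  (2 * i%:R + sigma al be) * poch ((k + l)%:R - n%:R) (i - k - l)
  / (poch (al + (2 * l)%:R + 1) (i - k - l)
     * poch (i%:R + (k + l)%:R + sigma al be) (n.+1 - k - l)).

Definition zeta_ratio (i : nat) : R :=
  ((2 * i%:R + sigma al be) * (i%:R + k%:R + l%:R + al + be) * (i%:R - n%:R - 1))
  / ((al + l%:R + i%:R - k%:R) * (i%:R + n%:R + sigma al be) * (2 * i%:R + al + be - 1)).

Lemma zcE h i : zc n k l al be h i =
  'C(n, h)%:R * (poch (al + (2 * l)%:R + 1) (n - l - h) * poch (be + (2 * k)%:R + 1) (h - k))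
  * zeta i.
Proof. by rewrite /zc /zeta; ring. Qed.

Lemma zeta_kl : (k + l <= n)%N -> (2 * (k + l))%:R + sigma al be != 0 ->
  zeta (k + l) = (poch ((2 * k)%:R + (2 * l)%:R + sigma al be + 1) (n - k - l))^-1.
Proof.
move=> le_kl_n c_neq0; rewrite /zeta (_ : (k + l - k - l = 0)%N) ?poch0 ?mulr1 ?mul1r; last by lia.
rewrite (_ : (n.+1 - k - l = (n - k - l).+1)%N); last by lia.
have -> : (k + l)%:R + (k + l)%:R + sigma al be = (2 * (k + l))%:R + sigma al be.
  by rewrite natrM; ring.
have -> : 2 * (k + l)%:R + sigma al be = (2 * (k + l))%:R + sigma al be by rewrite natrM.
rewrite pochSl invfM mulrA mulfV // mul1r; congr (poch _ _)^-1.
by rewrite !natrM natrD; ring.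
Qed.

Lemma zeta_ratioE M : (k + l <= n)%N ->
  let c := (k + l + M)%:R + (k + l)%:R + sigma al be in
  zeta_ratio (k + l + M).+1 =
    (2 * (k + l + M).+1%:R + sigma al be) * c * ((k + l)%:R - n%:R + M%:R)
    / ((al + (2 * l)%:R + 1 + M%:R) * (c + (n.+1 - k - l)%N%:R)
       * (2 * (k + l + M)%:R + sigma al be)).
Proof.
move=> le_kl_n c; rewrite /zeta_ratio /c -subnDA natrB; last by lia.
by congr (_ / _); rewrite -!natr1 ?natrM !natrD /sigma; ring.
Qed.

Lemma wc_kl h : wc n k l al be h (k + l) = 1.
Proof.
by rewrite /wc -subnDA subnn /hahnQ big_ord1 !poch0 fact0 !mulr1 divr1.
Qed.

Lemma wc_klS h : (k + l <= n)%N ->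
  wc n k l al be h (k + l).+1 =
  1 + ((h%:R - k%:R) * ((2 * k)%:R + (2 * l)%:R + sigma al be + 1))
      / (((k + l)%:R - n%:R) * (be + (2 * k)%:R + 1)).
Proof.
move=> le_kl_n; rewrite /wc (_ : ((k + l).+1 - k - l = 1)%N); last by lia.
rewrite /hahnQ big_ord_recr big_ord1 /= !pochS !poch0 !mul1r !addr0 invr1.
by rewrite -subnDA natrB //; congr (_ + _ / _); rewrite /sigma; ring.
Qed.

Lemma Sc_hahn m : (k + l <= n)%N ->
  Sc n k l al be (k + l + m) = - hahnC a b N m%:R / hahnA a b N m%:R.
Proof.
move=> le_kl_n; rewrite /Sc /hahnC /hahnA -subnDA natrB // mulNr -mulrN -invrN.
by congr (_ / _); rewrite ?natrD ?natrM; ring.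
Qed.

Lemma Pc_hahn h m : (k + l <= n)%N -> hahnA a b N m%:R != 0 ->
  Pc n k l al be h (k + l + m) =
  (hahnA a b N m%:R + hahnC a b N m%:R - (h%:R - k%:R) * hahnD a b m%:R) / hahnA a b N m%:R.
Proof.
move=> le_kl_n A_neq0; rewrite /Pc Sc_hahn //; set i : R := (k + l + m)%:R.
have f_neq0 : 2 * m%:R + a + b - 2 != 0.
  by apply: contraNneq A_neq0 => f_eq0; rewrite /hahnA f_eq0 mulr0.
have -> : (i + k%:R + l%:R + al + be) * (i + k%:R + be - l%:R) * (i - n%:R - 1)
          = - hahnA a b N m%:R / (2 * m%:R + a + b - 2).
  by apply: (canRL (mulfK f_neq0)); rewrite /i /hahnA -subnDA natrB // !natrD; ring.
have -> : (k%:R - h%:R) * poch (2 * i + al + be - 1) 2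
          = - ((h%:R - k%:R) * hahnD a b m%:R) / (2 * m%:R + a + b - 2).
  by apply: (canRL (mulfK f_neq0)); rewrite /i /hahnD !pochS poch0 !natrD; ring.
by field; rewrite oppr_eq0 A_neq0 -(natrM _ 2 k) -(natrM _ 2 l) f_neq0.
Qed.

End PaperCoefficients.

Lemma sigmaD_neq0 (R : realFieldType) (k l : nat) (al be : R) (t : nat) :
  -1 < al -> -1 < be -> (2 * (k + l))%:R + sigma al be != 0 ->
  (2 * (k + l))%:R + sigma al be + t%:R != 0.
Proof.
move=> al_gt be_gt; apply: addr_nat_neq0.
by rewrite /sigma; have := ler0n R (2 * (k + l)); lra.
Qed.

Lemma zeta_rec (R : realFieldType) (n k l : nat) (al be : R) (i : nat) :
  -1 < al -> -1 < be -> (k + l <= n)%N -> (2 * (k + l))%:R + sigma al be != 0 ->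
  (k + l < i)%N -> zeta n k l al be i = zeta_ratio n k l al be i * zeta n k l al be i.-1.
Proof.
move=> al_gt be_gt le_kl_n sig_neq0; case: i => // j; rewrite ltnS /= => le_kl_j.
have sigD_neq0 t := sigmaD_neq0 t al_gt be_gt sig_neq0.
rewrite -(subnKC le_kl_j); move: (j - (k + l))%N => M {le_kl_j}.
rewrite zeta_ratioE // /zeta.
have -> : ((k + l + M).+1 - k - l = M.+1)%N by lia.
have -> : ((k + l + M) - k - l = M)%N by lia.
move: (n.+1 - k - l)%N => r; rewrite !pochS.
set c := (k + l + M)%:R + (k + l)%:R + sigma al be.
have c_eq : c = (2 * (k + l))%:R + sigma al be + M%:R by rewrite /c natrM !natrD; ring.
have -> : (k + l + M).+1%:R + (k + l)%:R + sigma al be = c + 1 by rewrite /c -natr1; ring.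
clearbody c.
have c_neq0 : c != 0 by rewrite c_eq sigD_neq0.
have -> : poch (c + 1) r = poch c r * (c + r%:R) / c by rewrite -poch_shift mulrC mulKf.
have cr_neq0 : c + r%:R != 0 by rewrite c_eq -addrA -natrD sigD_neq0.
have P_neq0 : poch c r != 0 by apply: poch_neq0 => t _; rewrite c_eq -addrA -natrD sigD_neq0.
have s_neq0 : 2 * (k + l + M)%:R + sigma al be != 0.
  rewrite (_ : _ + _ = (2 * (k + l))%:R + sigma al be + (2 * M)%:R) ?sigD_neq0 //.
  by rewrite !natrM natrD; ring.
have b_gt : 0 < al + (2 * l)%:R + 1 by have := ler0n R (2 * l); lra.
have Q_neq0 := lt0r_neq0 (poch_gt0 M b_gt).
have u_neq0 : al + (2 * l)%:R + 1 + M%:R != 0 by rewrite lt0r_neq0 // ltr_wpDr ?ler0n.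
move: (2 * (k + l + M)%:R + sigma al be) s_neq0 => s s_neq0.
move: (al + (2 * l)%:R + 1 + M%:R) u_neq0 => u u_neq0.
by field; rewrite c_neq0 cr_neq0 P_neq0 s_neq0 u_neq0 Q_neq0.
Qed.

Lemma wc_rec (R : realFieldType) (n k l : nat) (al be : R) (h i : nat) :
  -1 < al -> -1 < be -> (k + l + 2 <= i <= n)%N ->
  wc n k l al be h i = Pc n k l al be h i * wc n k l al be h i.-1
                       + Sc n k l al be i * wc n k l al be h (i - 2).
Proof.
move=> al_gt be_gt /andP[le_i le_in]; have le_kl_n : (k + l <= n)%N by lia.
have /subnKC <- : (k + l <= i)%N by lia.
have : (2 <= i - (k + l) <= n - k - l)%N by lia.
move: (i - (k + l))%N => m m_range.
have a_gt : -1 < be + (2 * k)%:R by have := ler0n R (2 * k); lra.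
have b_gt : -1 < al + (2 * l)%:R by have := ler0n R (2 * l); lra.
have A_neq0 := hahnA_neq0 a_gt b_gt m_range.
rewrite Pc_hahn // Sc_hahn // /wc.
have -> : (k + l + m - k - l = m)%N by lia.
have -> : ((k + l + m).-1 - k - l = m.-1)%N by lia.
have -> : (k + l + m - 2 - k - l = m - 2)%N by lia.
have := hahnQ_rec (al + (2 * l)%:R) (h%:R - k%:R) a_gt m_range.
move: A_neq0; set A := hahnA _ _ _ _; set C := hahnC _ _ _ _; set K := A + C - _.
move: (hahnQ m _ _ _ _) (hahnQ m.-1 _ _ _ _) (hahnQ (m - 2) _ _ _ _) => Q2 Q1 Q0 A_neq0 rec.
rewrite -[Q2](mulKf A_neq0) (_ : A * Q2 = K * Q1 - C * Q0); first by field.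
by rewrite -[LHS]subr0 -rec; ring.
Qed.

Theorem theorem3 (R : realFieldType) (n k l : nat) (al be : R) :
  (k + l <= n)%N -> -1 < al -> -1 < be ->
  (2 * (k + l))%:R + sigma al be != 0 ->
  forall h : nat, (k <= h <= n - l)%N ->
  [/\ zc n k l al be h (k + l) =
        'C(n, h)%:R * (poch (al + (2 * l)%:R + 1) (n - l - h)
                       * poch (be + (2 * k)%:R + 1) (h - k))
        / poch ((2 * k)%:R + (2 * l)%:R + sigma al be + 1) (n - k - l),
      (forall i : nat, (k + l + 1 <= i <= n)%N ->
        zc n k l al be h i =
          ((2 * i%:R + sigma al be) * (i%:R + k%:R + l%:R + al + be) * (i%:R - n%:R - 1))
          / ((al + l%:R + i%:R - k%:R) * (i%:R + n%:R + sigma al be)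
             * (2 * i%:R + al + be - 1))
          * zc n k l al be h i.-1),
      wc n k l al be h (k + l) = 1,
      ((k + l + 1 <= n)%N ->
        wc n k l al be h (k + l).+1 =
          1 + ((h%:R - k%:R) * ((2 * k)%:R + (2 * l)%:R + sigma al be + 1))
              / (((k + l)%:R - n%:R) * (be + (2 * k)%:R + 1)))
    & (forall i : nat, (k + l + 2 <= i <= n)%N ->
        wc n k l al be h i =
          Pc n k l al be h i * wc n k l al be h i.-1
          + Sc n k l al be i * wc n k l al be h (i - 2))].
Proof.
move=> le_kl_n al_gt be_gt c_neq0 h _; split.
- by rewrite zcE zeta_kl.
- move=> i /andP[+ _]; rewrite addn1 => lt_kl_i.
  by rewrite !zcE zeta_rec // /zeta_ratio; ring.
- exact: wc_kl.
- by move=> _; rewrite wc_klS.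
- by move=> i; apply: wc_rec.
Qed.
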